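(* Let $B_1$ and $B_2$ be bouquets whose signed intersection graphs $SI(B_1)$ and $SI(B_2)$ are isomorphic (via a graph isomorphism preserving signs). Then $P_\bullet(B_1,x)=P_\bullet(B_2,x)$ for every $\bullet\in\{\langle\delta\rangle,\langle\delta\tau\rangle,\langle\tau\delta\tau\rangle,\langle\delta,\tau\rangle\}$.
   Context: A ribbon graph $G=(V(G),E(G))$ is a (orientable or non-orientable) surface with boundary, represented as the union of a set $V(G)$ of vertex discs and a set $E(G)$ of edge discs (ribbons) such that vertices and edges intersect in disjoint line segments, each such segment lies on the boundary of exactly one vertex and exactly one edge, and every edge contains exactly two such segments. $v(G)$ denotes the number of vertices. A bouquet is a ribbon graph with exactly one vertex. A loop is non-orientable if the ribbon together with its vertex forms a Möbius band, and orientable otherwise. Two loops of a bouquet are interlaced if their ends alternate in the cyclic order around the vertex boundary. The intersection graph $I(B)$ of a bouquet $B$ has vertex set $E(B)$, two vertices adjacent iff the loops are interlaced; the signed intersection graph $SI(B)$ is $I(B)$ with each vertex signed $+$ if the loop is orientable and $-$ if non-orientable. For $A\subseteq E(G)$, the partial dual $G^{\delta(A)}$ is obtained by gluing a disc along each boundary component of the spanning ribbon subgraph $(V(G),A)$ (these discs become the vertex discs), removing the interiors of the original vertex discs, and keeping the edge ribbons. The partial Petrial $G^{\tau(A)}$ adds a half-twist to each edge in $A$. For a word $w=w_1\cdots w_n$ over $\{\delta,\tau\}$, $G^{w(A)}=(\cdots(G^{w_n(A)})^{w_{n-1}(A)}\cdots)^{w_1(A)}$ (rightmost letter applied first), $G^{1(A)}=G$,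 and $G^{\xi(A)\pi(B)}=(G^{\xi(A)})^{\pi(B)}$. Vertex polynomials (sums over ordered partitions of $E(G)$ into pairwise disjoint, possibly empty parts): $P_{\langle\delta\rangle}(G,x)=\sum_{A\subseteq E(G)}x^{v(G^{\delta(A)})}$; $P_{\langle\tau\delta\tau\rangle}(G,x)=\sum_{A\subseteq E(G)}x^{v(G^{\tau\delta\tau(A)})}$; $P_{\langle\delta\tau\rangle}(G,x)=\sum_{(A_1,A_2,A_3)}x^{v(G^{1(A_1)\tau\delta(A_2)\delta\tau(A_3)})}$; $P_{\langle\delta,\tau\rangle}(G,x)=\sum_{(A_1,\dots,A_6)}x^{v(G^{1(A_1)\delta(A_2)\tau(A_3)\tau\delta(A_4)\delta\tau(A_5)\tau\delta\tau(A_6)})}$. *)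

From HB Require Import structures.
From mathcomp Require Import all_boot all_order all_algebra.
Set Implicit Arguments. Unset Strict Implicit. Unset Printing Implicit Defensive.
Import GRing.Theory.

(* ---------- General ribbon graphs as gems on a fixed flag set ----------
   A ribbon graph is encoded by its flags F (the 4 corners of each edge
   ribbon where it meets a vertex disc) with three involutions:
     t0 : along a side of an edge ribbon (to the other end of the edge),
     t1 : along a vertex-boundary arc between consecutive edge ends,
     t2 : across an edge-end segment (same vertex, same edge).
   Vertices = orbits of <t1,t2>, edges = orbits of <t0,t2>,
   boundary components = orbits of <t0,t1>.  Partial duality and partial
   Petriality leave the flag set and the edge map unchanged. *)

Inductive rop := OpD | OpT .

Definition gem (F : finType) := ((F -> F) * (F -> F) * (F -> F))%type.

Section Gem.
Variables (F E : finType) (edge_of : F -> E).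

Definition g0 (g : gem F) := g.1.1.
Definition g1 (g : gem F) := g.1.2.
Definition g2 (g : gem F) := g.2.

Definition pdual (A : {set E}) (g : gem F) : gem F :=
  ((fun x => if edge_of x \in A then g2 g x else g0 g x), g1 g,
   (fun x => if edge_of x \in A then g0 g x else g2 g x)).

(* partial Petrial G^{tau(A)}: half-twist on each edge of A *)
Definition ppetrial (A : {set E}) (g : gem F) : gem F :=
  ((fun x => if edge_of x \in A then g0 g (g2 g x) else g0 g x), g1 g, g2 g).

Definition app_op (o : rop) (A : {set E}) (g : gem F) : gem F :=
  match o with OpD => pdual A g | OpT => ppetrial A g end.

(* G^{w(A)} for w = w_1 ... w_n : w_n is applied first *)
Definition app_word (w : seq rop) (A : {set E}) (g : gem F) : gem F :=
  foldr (fun o h => app_op o A h) g w.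

(* G^{xi_1(A_1) xi_2(A_2) ...} = ((G^{xi_1(A_1)})^{xi_2(A_2)}) ... *)
Definition app_seq (l : seq (seq rop * {set E})) (g : gem F) : gem F :=
  foldl (fun h p => app_word p.1 p.2 h) g l.

(* vertices with at least one incident edge = orbits of <t1,t2> *)
Definition vrel (g : gem F) : rel F := [rel x y | (y == g1 g x) || (y == g2 g x)].
Definition gem_orbits (g : gem F) : nat :=
  #|[set [set y | connect (vrel g) x y] | x : F]|.
End Gem.

(* ---------- Bouquets ----------
   A bouquet with m loops 'I_m: reading the boundary of its (oriented) vertex
   disc, the 2m edge-end segments at positions 'I_(2m) carry the loops bw i;
   each loop occurs exactly twice.  bor e = true iff the ribbon of e is
   untwisted relative to the vertex orientation, i.e. e together with the
   vertex is an annulus (orientable loop); false = Moebius band. *)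
Record bouquet := Bouquet {
  bm : nat;
  bw : 'I_(bm.*2) -> 'I_bm;
  bor : 'I_bm -> bool;
  bwP : forall e, #|[set i | bw i == e]| = 2 }.

Section BouquetDefs.
Variable B : bouquet.

Definition bflag := ('I_(bm B).*2 * bool)%type.
(* flag (i, false) = start of segment i, (i, true) = its end (w.r.t. the
   vertex orientation) *)

Definition bedge (x : bflag) : 'I_(bm B) := bw x.1.

Definition other_end (i : 'I_(bm B).*2) : 'I_(bm B).*2 :=
  odflt i [pick j | (j != i) && (bw j == bw i)].

Definition bt0 (x : bflag) : bflag :=
  (other_end x.1, if bor (bw x.1) then ~~ x.2 else x.2).
Definition bt1 (x : bflag) : bflag :=
  if x.2 then (ordS x.1, false) else (ord_pred x.1, true).
Definition bt2 (x : bflag) : bflag := (x.1, ~~ x.2).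

Definition bgem : gem bflag := (bt0, bt1, bt2).

(* number of vertices of a ribbon graph obtained from B by partial duals /
   Petrials (encoded by g); a bouquet without edges is one isolated vertex,
   which all these operations preserve *)
Definition nverts (g : gem bflag) : nat :=
  if bm B == 0 then 1 else gem_orbits g.

Definition loop_orientable (e : 'I_(bm B)) : bool := bor e.

Definition interlaced (e f : 'I_(bm B)) : bool :=
  (e != f) &&
  [exists i : 'I_(bm B).*2, exists j : 'I_(bm B).*2,
   exists k : 'I_(bm B).*2, exists l : 'I_(bm B).*2,
     [&& i < j, j < k, k < l &
       [&& bw i == e, bw j == f, bw k == e & bw l == f]
    || [&& bw i == f, bw j == e, bw k == f & bw l == e]]].

Definition part (n : nat) (f : {ffun 'I_(bm B) -> 'I_n}) (k : nat)
  : {set 'I_(bm B)} := [set e | nat_of_ord (f e) == k].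

Local Open Scope ring_scope.

Definition P_d : {poly int} :=
  \sum_(A : {set 'I_(bm B)})
     'X^(nverts (app_word bedge [:: OpD] A bgem)).

Definition P_tdt : {poly int} :=
  \sum_(A : {set 'I_(bm B)})
     'X^(nverts (app_word bedge [:: OpT; OpD; OpT] A bgem)).

Definition P_dt : {poly int} :=
  \sum_(f : {ffun 'I_(bm B) -> 'I_3})
     'X^(nverts (app_seq bedge
        [:: ([::], part f 0); ([:: OpT; OpD], part f 1);
            ([:: OpD; OpT], part f 2)] bgem)).

Definition P_d_t : {poly int} :=
  \sum_(f : {ffun 'I_(bm B) -> 'I_6})
     'X^(nverts (app_seq bedge
        [:: ([::], part f 0); ([:: OpD], part f 1); ([:: OpT], part f 2);
            ([:: OpT; OpD], part f 3); ([:: OpD; OpT], part f 4);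
            ([:: OpT; OpD; OpT], part f 5)] bgem)).
End BouquetDefs.

Definition SI_isomorphic (B1 B2 : bouquet) : Prop :=
  exists phi : 'I_(bm B1) -> 'I_(bm B2),
    [/\ bijective phi,
        forall e, loop_orientable (phi e) = loop_orientable e &
        forall e f, interlaced (phi e) (phi f) = interlaced e f].

From mathcomp Require Import all_boot all_order all_algebra zify.

Set Implicit Arguments.
Unset Strict Implicit.
Unset Printing Implicit Defensive.

(* A ribbon graph obtained from a bouquet B by partial duals and partial Petrials
   has the flags of B and the vertex-boundary involution t1 of B.  On the four
   flags of a loop e the other two involutions t0 and t2 act as two distinct
   nonzero elements of the Klein group of e (move to the other end, change side),
   and which ones depends only on the operations applied to e.  The vertices are
   the orbits of <t1, t2>, so 2^v counts the flag sets closed under t1 and t2.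
   Such a set is a two-colouring of the vertex boundary of B that switches colour
   at both ends of every loop of some set y; it is t2-closed iff t2 joins the two
   ends of every loop of y and, for each loop e on which t2 does so, the number
   of loops of y interlaced with e, plus one if e is in y with t2 untwisted
   relative to e, is even.  This parity system only involves the signed
   intersection graph, so an isomorphism SI(B1) = SI(B2) matches the summands of
   each polynomial one by one. *)

Section ClosedSets.
Variables (T : finType) (e : rel T).
Hypothesis e_sym : connect_sym e.

Definition closedb (Z : {set T}) :=
  [forall x, forall y, e x y ==> ((x \in Z) == (y \in Z))].

Local Notation component x := [set y | connect e x y].
Local Notation components := [set component x | x : T].

Lemma closedb_connect Z x y : closedb Z -> connect e x y -> (x \in Z) = (y \in Z).
Proof.
move=> /forallP Zcl; apply: (@closed_connect _ e (mem Z)) => a b eab.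
by have /forallP/(_ b)/implyP/(_ eab)/eqP := Zcl a.
Qed.

Lemma component_eq x y : connect e x y -> component x = component y.
Proof.
move=> xy; apply/setP => z; rewrite !inE; apply/idP/idP => [xz|]; last exact: connect_trans.
by apply: connect_trans xz; rewrite e_sym.
Qed.

Lemma card_closedb : #|[set Z | closedb Z]| = 2 ^ #|components|.
Proof.
have cover_sub (P Q : {set {set T}}) : P \subset components -> Q \subset components ->
    cover P = cover Q -> P \subset Q.
  move=> /subsetP Pc /subsetP Qc PQ; apply/subsetP => c cP.
  have /imsetP[x _ cx] := Pc c cP; subst c.
  have : x \in cover Q by rewrite -PQ; apply/bigcupP; exists (component x); rewrite ?inE.
  case/bigcupP => c cQ; have /imsetP[z _ cz] := Qc c cQ; subst c; rewrite inE => zx.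
  by rewrite -(component_eq zx).
rewrite -card_powerset -(card_in_imset (f := cover)); last first.
  move=> P Q; rewrite !powersetE => Pc Qc PQ.
  by apply/eqP; rewrite eqEsubset; apply/andP; split; apply: cover_sub.
apply: eq_card => Z; rewrite inE; apply/idP/imsetP => [Zcl|[P]].
  exists [set c in components | c \subset Z].
    by rewrite powersetE; apply/subsetP => c; rewrite inE => /andP[].
  apply/setP => x; apply/idP/bigcupP => [xZ|[c]];
    last by rewrite inE => /andP[_ /subsetP]; apply.
  exists (component x); last by rewrite inE connect0.
  rewrite inE imset_f //=; apply/subsetP => y; rewrite inE => xy.
  by rewrite -(closedb_connect Zcl xy).
rewrite powersetE => /subsetP Pc ->.
apply/forallP => x; apply/forallP => y; apply/implyP => /connect1 xy.
apply/eqP; apply/bigcupP/bigcupP => -[c cP]; have /imsetP[z _ cz] := Pc c cP; subst c;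
  rewrite inE => zxy; exists (component z); rewrite // inE.
- exact: connect_trans xy.
- by apply: connect_trans zxy _; rewrite e_sym.
Qed.

End ClosedSets.

Section BouquetEnds.
Variable B : bouquet.
Local Notation pos := 'I_(bm B).*2.

Lemma bw_fibre (i : pos) :
  [set j | bw j == bw i] = [set i; other_end i] /\ other_end i != i.
Proof.
set A := [set j | bw j == bw i]; have iA : i \in A by rewrite inE.
have [j Aj] : exists j, A :\ i = [set j].
  by apply/cards1P; have := cardsD1 i A; rewrite bwP iA add1n => -[<-].
have oeA : other_end i \in A :\ i.
  rewrite /other_end; case: pickP => [k /andP[ki bk]|none]; first by rewrite !inE ki.
  by have := none j; have := set11 j; rewrite -Aj !inE => /andP[-> ->].
split; last by move: oeA; rewrite !inE => /andP[].
by rewrite -(setD1K iA) Aj; move: oeA; rewrite Aj inE => /eqP ->.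
Qed.

Lemma other_end_neq (i : pos) : other_end i != i.
Proof. by case: (bw_fibre i). Qed.

Lemma eq_bw (i j : pos) : (bw j == bw i) = (j == i) || (j == other_end i).
Proof. by case: (bw_fibre i) => fibre _; rewrite -in_set2 -fibre inE. Qed.

Lemma bw_other_end (i : pos) : bw (other_end i) = bw i.
Proof. by apply/eqP; rewrite eq_bw eqxx orbT. Qed.

Lemma other_endK : involutive (@other_end B).
Proof.
move=> i; have := eq_bw (other_end i) i.
by rewrite bw_other_end eqxx eq_sym (negbTE (other_end_neq i)) => /esym/eqP.
Qed.

Lemma bw_surj (e : 'I_(bm B)) : exists i : pos, bw i = e.
Proof.
case: (pickP [pred i | bw i == e]) => [i /eqP|none]; first by exists i.
have := bwP e; suff -> : [set i | bw i == e] = set0 by rewrite cards0.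
by apply/setP => i; rewrite !inE; apply: none.
Qed.

Lemma first_end (e : 'I_(bm B)) : exists2 p : pos, bw p = e & p < other_end p.
Proof.
have [i <-] := bw_surj e; have := other_end_neq i; rewrite neq_ltn => /orP[lt|gt].
- by exists (other_end i); rewrite ?other_endK ?bw_other_end.
- by exists i.
Qed.

End BouquetEnds.

Section EdgeAction.
Variable B : bouquet.

(* [k.1] moves to the other end of the loop, [k.2] changes side; thus [bt0] is
   [edge_act (true, false)] and [bt2] is [edge_act (false, true)]. *)
Definition edge_act (k : bool * bool) (x : bflag B) : bflag B :=
  (if k.1 then other_end x.1 else x.1, x.2 (+) k.2 (+) (k.1 && bor (bw x.1))).

Lemma bw_edge_act k x : bw (edge_act k x).1 = bw x.1.
Proof. by case: k => [[] ?]; rewrite /= ?bw_other_end. Qed.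

Lemma edge_actD k k' x : edge_act k (edge_act k' x) = edge_act (k + k')%R x.
Proof.
case: x k k' => i b [u v] [u' v']; rewrite /edge_act /=.
by case: u u' => [] []; rewrite /= ?other_endK ?bw_other_end;
  congr (_, _); case: b v v' (bor (bw i)) => [] [] [] [].
Qed.

Lemma edge_act0 x : edge_act 0%R x = x.
Proof. by case: x => i b; rewrite /edge_act /= !addbF. Qed.

Lemma edge_act_invol k : involutive (edge_act k).
Proof. by move=> x; rewrite edge_actD; case: k => [[] []]; rewrite edge_act0. Qed.

Lemma bt1K : involutive (@bt1 B).
Proof. by case=> i []; rewrite /bt1 /= ?ordSK ?ord_predK. Qed.

End EdgeAction.

(* The Klein elements by which t0 and t2 act on a loop. *)
Definition loop_state := ((bool * bool) * (bool * bool))%type.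

Definition state_op (o : rop) (inA : bool) (s : loop_state) : loop_state :=
  if inA then match o with OpD => (s.2, s.1) | OpT => (s.1 + s.2, s.2)%R end else s.
Definition state_word (w : seq rop) (inA : bool) (s : loop_state) : loop_state :=
  foldr (fun o t => state_op o inA t) s w.
Definition state_seq (l : seq (seq rop * bool)) (s : loop_state) : loop_state :=
  foldl (fun t p => state_word p.1 p.2 t) s l.

Definition state_init : loop_state := ((true, false), (false, true)).

Definition klein_basis (s : loop_state) := [&& s.1 != 0, s.2 != 0 & s.1 != s.2]%R.

Lemma klein_basis_op o inA s : klein_basis s -> klein_basis (state_op o inA s).
Proof. by case: s => [[[] []] [[] []]]; case: o; case: inA. Qed.

Lemma klein_basis_word w inA s : klein_basis s -> klein_basis (state_word w inA s).
Proof. by elim: w => //= o w IH /IH; apply: klein_basis_op. Qed.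

Lemma klein_basis_seq l s : klein_basis s -> klein_basis (state_seq l s).
Proof. by elim: l s => //= p l IH s /(klein_basis_word p.1 p.2)/IH. Qed.

Section GemState.
Variable B : bouquet.
Local Notation E := 'I_(bm B).

Definition gem_state (g : gem (bflag B)) (S : E -> loop_state) :=
  forall x, [/\ g0 g x = edge_act (S (bedge x)).1 x, g1 g x = bt1 x
              & g2 g x = edge_act (S (bedge x)).2 x].

Lemma gem_state_bgem : gem_state (bgem B) (fun=> state_init).
Proof.
by case=> i b; split; rewrite /g0 /g2 //= /bt0 /edge_act /=; case: (bor (bw i)); case: b.
Qed.

Lemma gem_state_op g S o A : gem_state g S ->
  gem_state (app_op (@bedge B) o A g) (fun e => state_op o (e \in A) (S e)).
Proof.
rewrite /gem_state /g0 /g1 /g2 /bedge => gS x; have [g0x g1x g2x] := gS x.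
case: o; split; rewrite /= ?g0x ?g1x ?g2x; case: (bw x.1 \in A) => //=.
have [g0y _ _] := gS (edge_act (S (bw x.1)).2 x).
by rewrite /g0 /g2 g2x g0y bw_edge_act edge_actD.
Qed.

Lemma gem_state_word g S w A : gem_state g S ->
  gem_state (app_word (@bedge B) w A g) (fun e => state_word w (e \in A) (S e)).
Proof. by elim: w => //= o w IH /IH /(gem_state_op o A). Qed.

Definition edge_labels (l : seq (seq rop * {set E})) (e : E) :=
  [seq (p.1, e \in p.2) | p : seq rop * {set E} <- l].

Definition final_state (l : seq (seq rop * {set E})) (e : E) :=
  state_seq (edge_labels l e) state_init.

Lemma gem_state_seq g S l : gem_state g S ->
  gem_state (app_seq (@bedge B) l g) (fun e => state_seq (edge_labels l e) (S e)).
Proof. by elim: l g S => //= p l IH g S /(gem_state_word p.1 p.2); apply: IH. Qed.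

Lemma gem_state_app_seq l : gem_state (app_seq (@bedge B) l (bgem B)) (final_state l).
Proof. exact: gem_state_seq gem_state_bgem. Qed.

End GemState.

Lemma alternating_pairs (p q r t : nat) :
    p < q -> r < t -> p != r -> p != t -> q != r -> q != t ->
  (p < r < q) (+) (p < t < q) = [&& p < r, r < q & q < t] || [&& r < p, p < t & t < q].
Proof. lia. Qed.

Lemma card_set_pred_in (T : finType) (P : pred T) (A : {set T}) :
  #|[set j | P j && (j \in A)]| = \sum_(j in A) P j.
Proof.
rewrite -sum1dep_card (eq_bigl (fun j => (j \in A) && P j)) => [|j]; last by rewrite andbC.
by rewrite big_mkcondr.
Qed.

Section Interlacement.
Variable B : bouquet.
Local Notation pos := 'I_(bm B).*2.

Lemma ends_sorted (p i k : pos) : p < other_end p ->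
  bw i = bw p -> bw k = bw p -> i < k -> i = p /\ k = other_end p.
Proof.
move=> pq /eqP bi /eqP bk; move: bi bk; rewrite !eq_bw.
move=> /orP[]/eqP-> /orP[]/eqP->; rewrite ?ltnn //.
by move=> qp; have := ltn_trans pq qp; rewrite ltnn.
Qed.

Lemma interlacedE (p r : pos) : p < other_end p -> r < other_end r -> bw p != bw r ->
  interlaced (bw p) (bw r) =
    [&& p < r, r < other_end p & other_end p < other_end r]
 || [&& r < p, p < other_end r & other_end r < other_end p].
Proof.
move=> pq rt pr; rewrite /interlaced pr /=; apply/idP/idP.
- case/existsP=> i /existsP[j /existsP[k /existsP[l]]].
  case/and4P=> ij jk kl /orP[] /and4P[/eqP bi /eqP bj /eqP bk /eqP bl].
  + have [ip kq] := ends_sorted pq bi bk (ltn_trans ij jk).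
    have [jr lt] := ends_sorted rt bj bl (ltn_trans jk kl).
    by move: ij jk kl; rewrite ip kq jr lt => -> -> ->.
  + have [ir kt] := ends_sorted rt bi bk (ltn_trans ij jk).
    have [jp lq] := ends_sorted pq bj bl (ltn_trans jk kl).
    by move: ij jk kl; rewrite ir kt jp lq => -> -> ->; rewrite orbT.
- case/orP=> /and3P[lt1 lt2 lt3]; apply/existsP.
  + exists p; apply/existsP; exists r; apply/existsP; exists (other_end p); apply/existsP.
    by exists (other_end r); rewrite lt1 lt2 lt3 !bw_other_end !eqxx.
  + exists r; apply/existsP; exists p; apply/existsP; exists (other_end r); apply/existsP.
    by exists (other_end p); rewrite lt1 lt2 lt3 !bw_other_end !eqxx orbT.
Qed.

Lemma val_neq_of_bw (a b : pos) : bw a != bw b -> (a : nat) != b.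
Proof. by apply: contra => /eqP/val_inj ->. Qed.

Lemma odd_ends_inside (p : pos) (f : 'I_(bm B)) : p < other_end p -> bw p != f ->
  odd #|[set j : pos | (p < j < other_end p) && (bw j == f)]| = interlaced (bw p) f.
Proof.
move=> pq pf; have [r rf rt] := first_end f; rewrite -rf in pf *.
under eq_finset => j do rewrite eq_bw -in_set2.
rewrite card_set_pred_in big_setU1 ?big_set1 ?inE 1?eq_sym ?other_end_neq //=.
rewrite oddD !oddb interlacedE // alternating_pairs //;
  by apply: val_neq_of_bw; rewrite ?bw_other_end.
Qed.

End Interlacement.

Section EndCounts.
Variables (B : bouquet) (y : {set 'I_(bm B)}).
Local Notation pos := 'I_(bm B).*2.

Definition ends_before (k : nat) := #|[set j : pos | (j < k) && (bw j \in y)]|.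

Lemma ends_before_split k k' : k <= k' ->
  ends_before k' = ends_before k + #|[set j : pos | (k <= j < k') && (bw j \in y)]|.
Proof.
move=> kk'; rewrite /ends_before -(cardsID [set j : pos | j < k] [set j : pos | _ && _]).
by congr (_ + _); apply: eq_card => j; rewrite !inE;
  case: (ltnP j k) => jk; case: (ltnP j k') => jk' //=; lia.
Qed.

Lemma ends_before0 : ends_before 0 = 0.
Proof. by apply/eqP; rewrite cards_eq0; apply/eqP/setP => j; rewrite !inE. Qed.

Lemma ends_beforeS (i : pos) : ends_before i.+1 = ends_before i + (bw i \in y).
Proof.
rewrite (ends_before_split (leqnSn i)); congr (_ + _).
rewrite (@eq_finset _ _ (fun j : pos => (bw j \in y) && (j \in [set i]))) => [|j].
  by rewrite card_set_pred_in big_set1.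
by rewrite !inE ltnS -eqn_leq andbC eq_sym.
Qed.

Lemma card_ends_by_edge (P : pred pos) :
  #|[set j | P j && (bw j \in y)]| = \sum_(f in y) #|[set j | P j && (bw j == f)]|.
Proof.
rewrite -sum1dep_card (partition_big (fun j : pos => bw j) (mem y)) /= => [|j /andP[] //].
apply: eq_bigr => f fy; rewrite -sum1dep_card; apply: eq_bigl => j.
by case: (eqVneq (bw j) f) => [->|]; rewrite ?fy ?andbT ?andbF.
Qed.

Lemma ends_before_even : ~~ odd (ends_before (bm B).*2).
Proof.
rewrite /ends_before (@eq_finset _ _ (fun j : pos => true && (bw j \in y))) => [|j];
  last by rewrite ltn_ord.
rewrite card_ends_by_edge (eq_bigr (fun=> 2)) => [|f _]; last first.
  by rewrite -(bwP f); apply: eq_card => j; rewrite !inE.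
by rewrite sum_nat_const oddM andbF.
Qed.

Lemma odd_ends_between (p : pos) : p < other_end p ->
  odd #|[set j : pos | (p < j < other_end p) && (bw j \in y)]| =
  odd #|[set f in y | interlaced (bw p) f]|.
Proof.
move=> pq; rewrite card_ends_by_edge -sum1dep_card big_mkcondr /=.
apply: (big_ind2 (fun a b => odd a = odd b)) => // [a a' b b' Ha Hb|f _].
  by rewrite !oddD Ha Hb.
have [<-|pf] := eqVneq (bw p) f; last by rewrite odd_ends_inside //; case: interlaced.
rewrite /interlaced eqxx /= (@eq_finset _ _ (pred0)) ?cards0 // => j.
rewrite !inE eq_bw; case: (eqVneq j p) => [->|_]; first by rewrite ltnn.
by case: (eqVneq j (other_end p)) => [->|_]; rewrite ?ltnn ?andbF.
Qed.

End EndCounts.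

(* [c e] is the Klein element by which t2 acts on the loop [e]: [(c e).1] means
   that t2 joins the two ends of [e]. *)
Section ParityConditions.
Variables (E : finType) (orientable : E -> bool) (adj : rel E) (c : E -> bool * bool).

Definition even_at (y : {set E}) (e : E) :=
  ~~ odd (#|[set f in y | adj e f]| + ((e \in y) && ((c e).2 == orientable e))).

Definition admissible (y : {set E}) :=
  (y \subset [set e | (c e).1]) && [forall e, (c e).1 ==> even_at y e].

End ParityConditions.

Section FlagsConnected.
Variable B : bouquet.
Local Notation n := (bm B).*2.

Lemma flags_connected (T : Type) (d : bflag B -> T) :
  (forall x, d (bt1 x) = d x) -> (forall x, d (bt2 x) = d x) -> forall x x', d x = d x'.
Proof.
move=> d1 d2 [i0 b0]; have n_gt0 : 0 < n := leq_ltn_trans (leq0n i0) (ltn_ord i0).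
have side b j : d (j, b) = d (j, false) by case: b => //; rewrite -d2.
suff d_start j b : d (j, b) = d (Ordinal n_gt0, false) by case=> j b; rewrite !d_start.
case: j => k; elim: k b => [|k IH] b hk; rewrite side.
  by congr d; congr (_, _); apply: val_inj.
have hk' : k < n := ltnW hk.
have -> : (Ordinal hk, false) = bt1 (Ordinal hk', true).
  by congr (_, _); apply: val_inj; rewrite /= modn_small.
by rewrite d1 IH.
Qed.

End FlagsConnected.

Section VertexClosedSets.
Variables (B : bouquet) (c : 'I_(bm B) -> bool * bool).
Hypothesis c_neq0 : forall e, c e != 0%R.
Local Notation pos := 'I_(bm B).*2.
Local Notation even_at := (even_at (@bor B) (@interlaced B) c).

Definition edge_move (x : bflag B) := edge_act (c (bw x.1)) x.

Definition vertex_rel : rel (bflag B) := [rel x y | (y == bt1 x) || (y == edge_move x)].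

Lemma edge_moveK : involutive edge_move.
Proof. by move=> x; rewrite /edge_move bw_edge_act edge_act_invol. Qed.

Lemma vertex_rel_sym : connect_sym vertex_rel.
Proof.
have swap f : involutive f -> forall x y : bflag B, (y == f x) = (x == f y).
  by move=> fK x y; apply/eqP/eqP => ->; rewrite fK.
apply: sym_connect_sym => x y.
by rewrite /vertex_rel /= (swap _ (@bt1K B)) (swap _ edge_moveK).
Qed.

Lemma vertex_closedP (Z : {set bflag B}) : reflect
  (forall x, (bt1 x \in Z) = (x \in Z) /\ (edge_move x \in Z) = (x \in Z))
  (closedb vertex_rel Z).
Proof.
apply: (iffP forallP) => [Zcl x | Zinv x]; last first.
  have [Z1 Z2] := Zinv x.
  by apply/forallP => y; apply/implyP => /orP[]/eqP->; rewrite ?Z1 ?Z2.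
have step y : vertex_rel x y -> (y \in Z) = (x \in Z).
  by move=> xy; have /forallP/(_ y)/implyP/(_ xy)/eqP := Zcl x.
by split; apply: step; rewrite /vertex_rel /= eqxx ?orbT.
Qed.

Lemma edge_move_side (i : pos) b : ~~ (c (bw i)).1 -> edge_move (i, b) = bt2 (i, b).
Proof.
by move: (c_neq0 (bw i)); rewrite /edge_move /edge_act /=; case: (c _) => [[] []] //= _ _;
  rewrite addbT addbF.
Qed.

Lemma edge_move_end (i : pos) b : (c (bw i)).1 ->
  edge_move (i, b) = (other_end i, b (+) ((c (bw i)).2 (+) bor (bw i))).
Proof. by rewrite /edge_move /edge_act /=; case: (c _) => [[] ?] //= _; rewrite addbA. Qed.

Definition crossing (y : {set 'I_(bm B)}) (x : bflag B) :=
  odd (ends_before y x.1) (+) (x.2 && (bw x.1 \in y)).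

Lemma crossing_bt1 y x : crossing y (bt1 x) = crossing y x.
Proof.
suff crossing_next (i : pos) : crossing y (bt1 (i, true)) = crossing y (i, true).
  by case: x => i [] //; rewrite -{2}(bt1K (i, false)) crossing_next.
rewrite /crossing /bt1 /= addbF; have := ltn_ord i.
rewrite leq_eqVlt => /orP[/eqP last_i|lt_i].
  by rewrite last_i modnn ends_before0 -[bw i \in y]oddb -oddD -ends_beforeS last_i
       (negbTE (ends_before_even y)).
by rewrite modn_small // ends_beforeS oddD oddb.
Qed.

Lemma crossing_edge_move y x : (c (bw x.1)).1 ->
  (crossing y (edge_move x) == crossing y x) = even_at y (bw x.1).
Proof.
wlog lt_x : x / x.1 < other_end x.1.
  move=> gen cx; have := other_end_neq x.1.
  rewrite neq_ltn => /orP[gt_x|lt_x]; last exact: gen.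
  case: x gt_x cx => i b gt_i ci; have := gen (edge_move (i, b)).
  by rewrite edge_moveK edge_move_end //= other_endK bw_other_end eq_sym; apply.
case: x lt_x => i b /= lt_i ci; rewrite edge_move_end // /crossing /= bw_other_end.
rewrite (ends_before_split y lt_i) ends_beforeS !oddD odd_ends_between // /even_at oddD.
by case: (odd (ends_before y i)) (bw i \in y) (odd #|_|) (c (bw i)).2 (bor (bw i)) b
  => [] [] [] [] [] [].
Qed.

(* Two-colour the flags, switching colour at each end of a loop of [y]. *)
Definition cut (y : {set 'I_(bm B)}) (beta : bool) := [set x | crossing y x (+) beta].

Lemma cut_closed (y : {set 'I_(bm B)}) beta : y \subset [set e | (c e).1] ->
  closedb vertex_rel (cut y beta) = [forall e, (c e).1 ==> even_at y e].
Proof.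
move=> /subsetP y_dual.
have eq_beta a b : (a (+) beta == b (+) beta) = (a == b) by case: a b beta => [] [] [].
apply/vertex_closedP/forallP => [cl e | even x].
  apply/implyP => ce; have [i ie] := bw_surj e; rewrite -ie in ce *.
  by have [_] := cl (i, false); rewrite !inE => /eqP; rewrite eq_beta crossing_edge_move.
rewrite !inE crossing_bt1; split => //; case: x => i b.
have [ci|nci] := boolP (c (bw i)).1.
  have := implyP (even (bw i)) ci.
  by rewrite -(crossing_edge_move y (x := (i, b))) // => /eqP ->.
have ny : bw i \notin y by apply: contraNN nci => /y_dual; rewrite inE.
by rewrite edge_move_side // /crossing /= (negbTE ny) !andbF.
Qed.

Definition cut_edges (Z : {set bflag B}) :=
  [set e | (c e).1 &&
     [exists i : pos, (bw i == e) && (((i, false) \in Z) != ((i, true) \in Z))]].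

Lemma cut_edgesK (y : {set 'I_(bm B)}) beta :
  y \subset [set e | (c e).1] -> cut_edges (cut y beta) = y.
Proof.
move=> /subsetP y_dual; apply/setP => e; rewrite inE.
have -> : [exists i : pos, (bw i == e) &&
             (((i, false) \in cut y beta) != ((i, true) \in cut y beta))] = (e \in y).
  apply/existsP/idP => [[i /andP[/eqP <-]]|ey].
    by rewrite !inE /crossing /= addbF; case: (odd _) (bw i \in y) beta => [] [] [].
  have [i ie] := bw_surj e; exists i; rewrite ie eqxx !inE /crossing /= ie ey addbF.
  by case: (odd _) beta => [] [].
by case: (boolP (e \in y)) => [/y_dual|]; rewrite ?inE ?andbF // => ->.
Qed.

Lemma closed_side_switch (Z : {set bflag B}) (i : pos) : closedb vertex_rel Z ->
  ((i, true) \in Z) = ((i, false) \in Z) (+) (bw i \in cut_edges Z).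
Proof.
move=> /vertex_closedP Zcl; rewrite inE.
have [ci|nci] := boolP (c (bw i)).1; last first.
  by have [_] := Zcl (i, false); rewrite edge_move_side // addbF => ->.
have same_switch (j : pos) : bw j == bw i ->
    (((j, false) \in Z) != ((j, true) \in Z)) = (((i, false) \in Z) != ((i, true) \in Z)).
  rewrite eq_bw => /orP[]/eqP-> //.
  have [_ Z0] := Zcl (i, false); have [_ Z1] := Zcl (i, true).
  move: Z0 Z1; rewrite !edge_move_end //=.
  by case: (_ (+) _) => /= -> ->; rewrite // eq_sym.
have -> : [exists j : pos, (bw j == bw i) && (((j, false) \in Z) != ((j, true) \in Z))] =
          (((i, false) \in Z) != ((i, true) \in Z)).
  apply/existsP/idP => [[j /andP[bj]]|]; first by rewrite same_switch.
  by exists i; rewrite eqxx.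
by case: ((i, false) \in Z) ((i, true) \in Z) => [] [].
Qed.

Lemma closed_cut (Z : {set bflag B}) (x0 : bflag B) : closedb vertex_rel Z ->
  Z = cut (cut_edges Z) (crossing (cut_edges Z) x0 (+) (x0 \in Z)).
Proof.
move=> Zcl; have /vertex_closedP Zinv := Zcl.
set y := cut_edges Z.
have const : forall x x', (x \in Z) (+) crossing y x = (x' \in Z) (+) crossing y x'.
  apply: flags_connected => [x|[i b]]; first by rewrite crossing_bt1 (proj1 (Zinv x)).
  by case: b; rewrite /bt2 /crossing /= (closed_side_switch i Zcl) -/y;
    case: ((i, false) \in Z) (odd _) (bw i \in y) => [] [] [].
apply/setP => x; rewrite inE [crossing y x0 (+) _]addbC (const x0 x).
by case: (x \in Z) (crossing y x) => [] [].
Qed.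

Lemma card_vertex_closed : 0 < bm B ->
  #|[set Z | closedb vertex_rel Z]| =
  2 * #|[set y | admissible (@bor B) (@interlaced B) c y]|.
Proof.
move=> m_gt0; have n_gt0 : 0 < (bm B).*2 by rewrite double_gt0.
pose x0 : bflag B := (Ordinal n_gt0, false).
have crossing_x0 y : crossing y x0 = false by rewrite /crossing /= ends_before0.
have in_cut_x0 y beta : (x0 \in cut y beta) = beta by rewrite inE crossing_x0.
have -> : [set Z | closedb vertex_rel Z] =
    [set cut p.1 p.2 | p in setX [set y | admissible (@bor B) (@interlaced B) c y] setT].
  apply/setP => Z; rewrite inE; apply/idP/imsetP => [Zcl|[[y beta]]]; last first.
    by rewrite !inE andbT => /andP[y_dual y_even] ->; rewrite cut_closed.
  have y_dual : cut_edges Z \subset [set e | (c e).1].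
    by apply/subsetP => e; rewrite !inE => /andP[].
  have Zcut := closed_cut x0 Zcl; rewrite crossing_x0 /= in Zcut.
  exists (cut_edges Z, x0 \in Z) => //.
  by rewrite !inE andbT /admissible y_dual /= -(cut_closed (x0 \in Z) y_dual) -Zcut.
rewrite card_in_imset => [|[y beta] [y' beta']];
  first by rewrite cardsX cardsT card_bool mulnC.
rewrite !inE !andbT /= => /andP[y_dual _] /andP[y'_dual _] eq_cut.
have -> : y = y' by rewrite -(cut_edgesK beta y_dual) eq_cut cut_edgesK.
by rewrite -(in_cut_x0 y beta) eq_cut in_cut_x0.
Qed.

End VertexClosedSets.

Lemma gem_orbits_closed (B : bouquet) (c : 'I_(bm B) -> bool * bool) (g : gem (bflag B)) :
  (forall e, c e != 0%R) -> g1 g =1 @bt1 B -> g2 g =1 edge_move c ->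
  2 ^ gem_orbits g = #|[set Z | closedb (vertex_rel c) Z]|.
Proof.
move=> c_neq0 g1E g2E; have same_rel : vrel g =2 vertex_rel c.
  by move=> x y; rewrite /vrel /= g1E g2E.
rewrite /gem_orbits
  (@eq_imset _ _ _ (fun x => [set y | connect (vertex_rel c) x y])) => [|x].
  by rewrite card_closedb //; apply: vertex_rel_sym.
by apply/setP => y; rewrite !inE (eq_connect same_rel).
Qed.

Lemma nverts_app_seq (B : bouquet) (l : seq (seq rop * {set 'I_(bm B)})) : 0 < bm B ->
  2 ^ nverts (app_seq (@bedge B) l (bgem B)) =
  2 * #|[set y | admissible (@bor B) (@interlaced B) (fun e => (final_state l e).2) y]|.
Proof.
move=> m_gt0; rewrite /nverts eqn0Ngt m_gt0 /=.
have c_neq0 e : (final_state l e).2 != 0%R.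
  by case/and3P: (klein_basis_seq (edge_labels l e) (isT : klein_basis state_init)).
have gS := gem_state_app_seq l.
rewrite (@gem_orbits_closed _ (fun e => (final_state l e).2)) ?card_vertex_closed //.
- by move=> x; have [] := gS x.
- by move=> x; have [_ _ ->] := gS x.
Qed.

Section AdmissibleTransport.
Variables (E1 E2 : finType) (phi : E1 -> E2) (psi : E2 -> E1).
Hypotheses (phiK : cancel phi psi) (psiK : cancel psi phi).
Variables (orientable1 : E1 -> bool) (adj1 : rel E1) (c1 : E1 -> bool * bool).
Variables (orientable2 : E2 -> bool) (adj2 : rel E2) (c2 : E2 -> bool * bool).
Hypothesis phi_orientable : forall e, orientable2 (phi e) = orientable1 e.
Hypothesis phi_adj : forall e f, adj2 (phi e) (phi f) = adj1 e f.
Hypothesis phi_c : forall e, c2 (phi e) = c1 e.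

Let phi_inj : injective phi := can_inj phiK.

Lemma imsetK_can (A : {set E2}) : phi @: (psi @: A) = A.
Proof. by rewrite -imset_comp (eq_imset _ psiK) imset_id. Qed.

Lemma even_at_imset (y : {set E1}) e :
  even_at orientable2 adj2 c2 (phi @: y) (phi e) = even_at orientable1 adj1 c1 y e.
Proof.
rewrite /even_at phi_orientable phi_c mem_imset //.
have -> : [set f in phi @: y | adj2 (phi e) f] = phi @: [set f in y | adj1 e f].
  by apply/setP => f; rewrite -(psiK f) !inE !mem_imset // inE phi_adj.
by rewrite card_imset.
Qed.

Lemma admissible_imset (y : {set E1}) :
  admissible orientable2 adj2 c2 (phi @: y) = admissible orientable1 adj1 c1 y.
Proof.
rewrite /admissible; congr andb.
  apply/subsetP/subsetP => y_dual e.
    by move=> ey; have := y_dual (phi e); rewrite mem_imset // !inE phi_c; apply.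
  by case/imsetP => f fy ->; have := y_dual f fy; rewrite !inE phi_c.
apply/forallP/forallP => even e; first by have := even (phi e); rewrite phi_c even_at_imset.
by rewrite -(psiK e) phi_c even_at_imset; apply: even.
Qed.

Lemma card_admissible_imset :
  #|[set y | admissible orientable2 adj2 c2 y]| =
  #|[set y | admissible orientable1 adj1 c1 y]|.
Proof.
rewrite -(card_imset _ (imset_inj phi_inj)); apply: eq_card => y2; rewrite inE.
apply/idP/imsetP => [adm|[y1 + ->]]; last by rewrite inE admissible_imset.
by exists (psi @: y2); rewrite ?imsetK_can // inE -admissible_imset imsetK_can.
Qed.

End AdmissibleTransport.

Lemma reindex_set_imset (E1 E2 : finType) (phi : E1 -> E2) (psi : E2 -> E1)
    (R : Type) (idx : R) (op : Monoid.com_law idx) (F : {set E2} -> R) :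
  cancel phi psi -> cancel psi phi ->
  \big[op/idx]_(A : {set E2}) F A = \big[op/idx]_(A : {set E1}) F (phi @: A).
Proof.
move=> phiK psiK; apply: reindex; exists (fun A : {set E2} => psi @: A) => A _.
  by rewrite -imset_comp (eq_imset _ phiK) imset_id.
by rewrite -imset_comp (eq_imset _ psiK) imset_id.
Qed.

Lemma reindex_ffun_comp (E1 E2 T : finType) (phi : E1 -> E2) (psi : E2 -> E1)
    (R : Type) (idx : R) (op : Monoid.com_law idx) (F : {ffun E2 -> T} -> R) :
  cancel phi psi -> cancel psi phi ->
  \big[op/idx]_(f : {ffun E2 -> T}) F f =
  \big[op/idx]_(f : {ffun E1 -> T}) F [ffun x => f (psi x)].
Proof.
move=> phiK psiK; apply: reindex.
exists (fun f : {ffun E2 -> T} => [ffun x => f (phi x)]) => f _;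
  by apply/ffunP => x; rewrite !ffunE ?phiK ?psiK.
Qed.

Section SITransport.
Variables (B1 B2 : bouquet).
Variables (phi : 'I_(bm B1) -> 'I_(bm B2)) (psi : 'I_(bm B2) -> 'I_(bm B1)).
Hypotheses (phiK : cancel phi psi) (psiK : cancel psi phi).
Hypothesis phi_orientable : forall e, loop_orientable (phi e) = loop_orientable e.
Hypothesis phi_interlaced : forall e f, interlaced (phi e) (phi f) = interlaced e f.

Lemma nverts_transport (l1 : seq (seq rop * {set 'I_(bm B1)}))
    (l2 : seq (seq rop * {set 'I_(bm B2)})) :
  (forall e, edge_labels l2 (phi e) = edge_labels l1 e) ->
  nverts (app_seq (@bedge B1) l1 (bgem B1)) = nverts (app_seq (@bedge B2) l2 (bgem B2)).
Proof.
move=> labels_phi; have bm_eq : bm B1 = bm B2.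
  by rewrite -[LHS]card_ord -[RHS]card_ord; apply: bij_eq_card; exists psi.
have [m0|m_gt0] := posnP (bm B1).
  have m0' : bm B2 == 0 by rewrite -bm_eq m0.
  by rewrite /nverts m0' (introT eqP m0).
apply/eqP; rewrite -(eqn_exp2l _ _ (ltnSn 1)) !nverts_app_seq -?bm_eq //.
apply/eqP; congr (2 * _); symmetry; apply: (card_admissible_imset phiK psiK) => // e.
by rewrite /final_state labels_phi.
Qed.

Lemma sum_sets_transport (w : seq rop) :
  (\sum_(A : {set 'I_(bm B1)}) 'X^(nverts (app_word (@bedge B1) w A (bgem B1))) =
   \sum_(A : {set 'I_(bm B2)}) 'X^(nverts (app_word (@bedge B2) w A (bgem B2)))
   :> {poly int})%R.
Proof.
rewrite [RHS](reindex_set_imset _ _ phiK psiK); apply: eq_bigr => A _.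
have labels e : edge_labels [:: (w, phi @: A)] (phi e) = edge_labels [:: (w, A)] e.
  by rewrite /edge_labels /= mem_imset //; apply: can_inj phiK.
by rewrite (nverts_transport labels).
Qed.

Lemma sum_parts_transport k (ws : seq (seq rop * nat)) :
  (\sum_(f : {ffun 'I_(bm B1) -> 'I_k})
     'X^(nverts (app_seq (@bedge B1) [seq (p.1, part f p.2) | p <- ws] (bgem B1))) =
   \sum_(f : {ffun 'I_(bm B2) -> 'I_k})
     'X^(nverts (app_seq (@bedge B2) [seq (p.1, part f p.2) | p <- ws] (bgem B2)))
   :> {poly int})%R.
Proof.
rewrite [RHS](reindex_ffun_comp _ _ phiK psiK); apply: eq_bigr => f _.
congr ('X^ _)%R; apply: nverts_transport => e.
by rewrite /edge_labels -!map_comp; apply: eq_map => p; rewrite /= !inE ffunE phiK.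
Qed.

End SITransport.

Theorem mainTheorem8 (B1 B2 : bouquet) :
  SI_isomorphic B1 B2 ->
  [/\ P_d B1 = P_d B2, P_dt B1 = P_dt B2,
      P_tdt B1 = P_tdt B2 & P_d_t B1 = P_d_t B2].
Proof.
case=> phi [[psi phiK psiK] phi_orientable phi_interlaced].
split.
- exact: (sum_sets_transport phiK psiK phi_orientable phi_interlaced [:: OpD]).
- exact: (sum_parts_transport phiK psiK phi_orientable phi_interlaced 3
            [:: ([::], 0); ([:: OpT; OpD], 1); ([:: OpD; OpT], 2)]).
- exact: (sum_sets_transport phiK psiK phi_orientable phi_interlaced [:: OpT; OpD; OpT]).
- exact: (sum_parts_transport phiK psiK phi_orientable phi_interlaced 6
            [:: ([::], 0); ([:: OpD], 1); ([:: OpT], 2);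
                ([:: OpT; OpD], 3); ([:: OpD; OpT], 4); ([:: OpT; OpD; OpT], 5)]).
Qed.
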